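(* There does not exist a countably additive exchangeable probability measure $P$ on $(\mathbb{R}^\infty,\mathcal B(\mathbb{R})^{\otimes\infty})$ for the coordinate sequence $Y_1,Y_2,\dots$ such that, for every $n\ge1$ and every $k\in\{0,\dots,n\}$, \[ P\big(Y_{n+1}\in I_k(Y_{1:n})\,\big|\,Y_{1:n}\big)=\frac{1}{n+1}\quad P\text{-a.s.}, \] where the conditional probability is the regular conditional distribution of $Y_{n+1}$ given $Y_{1:n}$ under $P$.
   Context: For $y_{1:n}\in\mathbb{R}^n$ with order statistics $y_{(1)}\le\cdots\le y_{(n)}$ and conventions $y_{(0)}=-\infty$, $y_{(n+1)}=+\infty$, the order-statistic cells are $I_k(y_{1:n})=(y_{(k)},y_{(k+1)}]$ for $k=0,\dots,n$. A probability measure on $\mathbb{R}^\infty$ is exchangeable if the joint law of $(Y_1,\dots,Y_n)$ is invariant under every permutation of the coordinates, for every $n$. *)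

From HB Require Import structures.
From mathcomp Require Import all_boot all_order all_algebra all_fingroup.
From mathcomp Require Import all_classical all_reals all_analysis.
Set Implicit Arguments. Unset Strict Implicit. Unset Printing Implicit Defensive.
Import Order.TTheory GRing.Theory Num.Theory numFieldNormedType.Exports.
Local Open Scope classical_set_scope.
Local Open Scope ring_scope.

Section defs.
Variable R : realType.

(* Coordinate maps Y_{i+1} (0-based index i) on R^infinity = nat -> R. *)
Definition coord (i : nat) : (nat -> R) -> R := fun w => w i.

(* Generators of the product sigma-algebra B(R)^{\otimes infinity}:
   preimages of Borel sets under the coordinate maps. *)
Definition coord_gen : set (set (nat -> R)) :=
  \bigcup_(i in [set: nat]) preimage_set_system setT (coord i) measurable.

Definition Rinf := g_sigma_algebraType coord_gen.

Definition sigmaY (n : nat) : set (set (nat -> R)) :=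
  g_sigma_preimage (fun i : 'I_n => coord i).

Definition permute_coords (n : nat) (s : {perm 'I_n}) (w : nat -> R) : nat -> R :=
  fun i => if insub i is Some j then w (val (s j)) else w i.

(* Order statistics y_(1) <= ... <= y_(n) of y_{1:n} = (w 0, ..., w (n-1)):
   ostat n w is the sorted list, so y_(j) = (ostat n w)`_(j-1). *)
Definition ostat (n : nat) (w : nat -> R) : seq R :=
  sort (fun x y : R => x <= y) [seq w i | i <- iota 0 n].

(* The event { Y_{n+1} \in I_k(Y_{1:n}) }, with I_k = (y_(k), y_(k+1)],
   y_(0) = -oo, y_(n+1) = +oo. *)
Definition cell_event (n k : nat) : set (nat -> R) :=
  [set w | ((k == 0)%N || ((ostat n w)`_k.-1 < w n)) &&
           ((k == n) || (w n <= (ostat n w)`_k))].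

(* Exchangeability: for every n the joint law of (Y_1,...,Y_n) is invariant under
   every permutation of the coordinates, i.e. for every B = {(Y_1..Y_n) \in C}
   in sigma(Y_1..Y_n), P(B) = P((Y_{s 1},...,Y_{s n}) \in C). *)
Definition exchangeable (P : probability Rinf R) : Prop :=
  forall (n : nat) (s : {perm 'I_n}) (B : set (nat -> R)),
    sigmaY n B -> P B = P (permute_coords s @^-1` B).

(* P(A | Y_{1:n}) = c  P-a.s., by the defining property of conditional
   probability given sigma(Y_{1:n}): P(A \cap B) = \int_B c dP for all B. *)
Definition condprob_const (P : probability Rinf R) (n : nat)
    (A : set (nat -> R)) (c : R) : Prop :=
  forall B : set (nat -> R), sigmaY n B -> P (A `&` B) = (c%:E * P B)%E.

End defs.

(* Only n = 1 and the exchangeability of (Y_1, Y_2) are needed.  For n = 1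
   the two cell conditions say that, given Y_1, the events {Y_2 <= Y_1} and
   {Y_1 < Y_2} are equally likely.  Since {Y_2 < Y_1} and {Y_1 < Y_2} are
   equally likely by exchangeability, ties Y_1 = Y_2 are null.  For every
   threshold a, P(Y_1 < Y_2, Y_1 <= a) = P(Y_2 <= Y_1 <= a) = P(Y_1 <= Y_2 <= a),
   and as the two events differ only by ties and by {Y_1 <= a < Y_2}, the
   latter is null.  Countably many rational thresholds cover {Y_1 < Y_2},
   which is therefore null, whereas it has probability 1/2. *)
From Pilot Require Import Defs.
From HB Require Import structures.
From mathcomp Require Import all_boot all_order all_algebra all_fingroup.
From mathcomp Require Import all_classical all_reals all_analysis.
From mathcomp Require Import measurable_realfun.
Import Order.TTheory GRing.Theory Num.Theory numFieldNormedType.Exports.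
Local Open Scope classical_set_scope.
Local Open Scope ring_scope.
Set Implicit Arguments.

Section measure_lemmas.
Context d (T : measurableType d) (R : realType) (mu : {measure set T -> \bar R}).

Lemma measureD_eq (A B : set T) : measurable A -> measurable B ->
  (mu A < +oo)%E -> mu A = mu B -> mu (A `\` B) = mu (B `\` A).
Proof.
move=> mA mB Aoo AB.
have Boo : (mu B < +oo)%E by rewrite -AB.
by rewrite !measureD // setIC; congr (_ - _)%E.
Qed.

Lemma negligible_ltr_rat (f g : T -> R) :
  (forall q : rat, mu.-negligible [set x | f x <= ratr q < g x]) ->
  mu.-negligible [set x | f x < g x].
Proof.
move=> hq.
pose F m := if @unpickle rat m is Some q then [set x | f x <= ratr q < g x]
            else set0.
(* Goals mentioning [F] must not be simplified: that evaluates [unpickle] on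
   [rat], which in practice does not terminate (hence also the split intros). *)
apply: (@negligibleS _ _ _ _ (\bigcup_m F m)).
  move=> x; move=> fg; have [q] := rat_in_itvoo fg.
  rewrite in_itv /= => /andP[fq qg].
  by exists (pickle q); last by rewrite /F pickleK /= (ltW fq).
apply: (@negligible_bigcup _ _ _ mu F) => m; rewrite /F.
by case: unpickle => [q|]; [exact: hq | exact: negligible_set0].
Qed.

End measure_lemmas.


Section coordinates.
Variable R : realType.

Definition coords n (w : nat -> R) : n.-tuple R := [tuple w i | i < n].

Lemma coordsE n (w : nat -> R) (i : 'I_n) : tnth (coords n w) i = w i.
Proof. by rewrite tnth_mktuple. Qed.

Lemma sigmaY_coords n (f : n.-tuple R -> bool) (A : set (nat -> R)) :
  measurable_fun setT f -> (forall w, A w <-> f (coords n w)) -> sigmaY n A.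
Proof.
move=> mf Af; rewrite /sigmaY.
have -> : (fun i : 'I_n => @Defs.coord R i) =
          (fun i => (fun t : n.-tuple R => tnth t i) \o coords n).
  by apply/funext => i; apply/funext => w; rewrite /= coordsE.
rewrite g_sigma_preimage_comp; exists (f @^-1` [set true]).
  by have := mf measurableT [set true] I; rewrite setTI.
by rewrite setTI; apply/seteqP; split => w /Af.
Qed.

Lemma sigmaY_measurable n (A : set (nat -> R)) :
  sigmaY n A -> measurable (A : set (Rinf R)).
Proof.
apply: smallest_sub; first exact: sigma_algebra_measurable.
rewrite -(bigcup_mkord n (fun i => preimage_set_system setT (@Defs.coord R i) measurable)).
move=> B [i _ [C mC <-]]; apply: sub_sigma_algebra.
by exists i => //; exists C.
Qed.

Lemma permute_coordsE n (s : {perm 'I_n}) (w : nat -> R) (i : 'I_n) :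
  permute_coords s w i = w (s i).
Proof. by rewrite /permute_coords valK. Qed.

Lemma sigmaY_setT n : sigmaY n (@setT (nat -> R)).
Proof. exact: (@sigmaY_coords n (fun=> true) _ (measurable_cst true)). Qed.

Lemma sigmaY_coord_le n (i : 'I_n) (a : R) : sigmaY n [set w | w i <= a].
Proof.
apply: (sigmaY_coords _ (measurable_fun_ler (@measurable_tnth _ R _ i) (measurable_cst a))).
by move=> w; rewrite coordsE.
Qed.

End coordinates.

Lemma cell_event10 (R : realType) : cell_event 1 0 = [set w : nat -> R | w 1%N <= w 0%N].
Proof. by apply/funext => w; rewrite /cell_event /ostat. Qed.

Lemma cell_event11 (R : realType) : cell_event 1 1 = [set w : nat -> R | w 0%N < w 1%N].
Proof. by apply/funext => w; rewrite /cell_event /ostat /= andbT. Qed.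

Section exchangeable_pair.
Variables (R : realType) (P : probability (Rinf R) R).
Hypothesis P_exchangeable : exchangeable P.
Hypothesis cell_balance : forall B, sigmaY 1 B ->
  P ([set w | w 1%N <= w 0%N] `&` B) = P ([set w | w 0%N < w 1%N] `&` B).

Let o0 : 'I_2 := ord0.
Let o1 : 'I_2 := ord_max.
Let mtnth (i : 'I_2) := @measurable_tnth _ R 2 i.
Let swap := @permute_coords R 2 (tperm o0 o1).
Let Le := [set w : nat -> R | w 1%N <= w 0%N].
Let Lt := [set w : nat -> R | w 0%N < w 1%N].
Let Gt := [set w : nat -> R | w 1%N < w 0%N].

Let swap0 w : swap w 0%N = w 1%N.
Proof. by have := @permute_coordsE R 2 (tperm o0 o1) w o0; rewrite tpermL. Qed.

Let swap1 w : swap w 1%N = w 0%N.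
Proof. by have := @permute_coordsE R 2 (tperm o0 o1) w o1; rewrite tpermR. Qed.

Let P_swap (A B : set (nat -> R)) : sigmaY 2 A ->
  (forall w, A (swap w) <-> B w) -> P A = P B.
Proof.
move=> sA AB; rewrite (P_exchangeable (tperm o0 o1) sA); congr (P _).
by apply/seteqP; split => w /AB.
Qed.

Let sigmaY_Le : sigmaY 2 Le.
Proof.
apply: (sigmaY_coords _ (measurable_fun_ler (mtnth o1) (mtnth o0))).
by move=> w; rewrite !coordsE.
Qed.

Let sigmaY_Lt : sigmaY 2 Lt.
Proof.
apply: (sigmaY_coords _ (measurable_fun_ltr (mtnth o0) (mtnth o1))).
by move=> w; rewrite !coordsE.
Qed.

Let sigmaY_Gt : sigmaY 2 Gt.
Proof.
apply: (sigmaY_coords _ (measurable_fun_ltr (mtnth o1) (mtnth o0))).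
by move=> w; rewrite !coordsE.
Qed.

Let P_fin (A : set (Rinf R)) : measurable A -> (P A < +oo)%E.
Proof. by move=> mA; rewrite ltey_eq fin_num_measure. Qed.

Lemma tie_negligible : P.-negligible [set w | w 0%N = w 1%N].
Proof.
have mLe := sigmaY_measurable sigmaY_Le; have mGt := sigmaY_measurable sigmaY_Gt.
have PLeGt : P Le = P Gt.
  have := cell_balance (@sigmaY_setT R 1); rewrite !setIT => ->.
  by apply: P_swap => // w; rewrite /Lt /Gt /= swap0 swap1.
exists (Le `\` Gt); split; first exact: measurableD.
  rewrite measureD_eq ?P_fin //.
  suff -> : Gt `\` Le = set0 by rewrite measure0.
  by apply/seteqP; split => // w [/ltW].
by move=> w /= e; rewrite /Le /Gt /setD /= e ltxx.
Qed.

Lemma split_negligible (a : R) : P.-negligible [set w | w 0%N <= a < w 1%N].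
Proof.
pose A := Lt `&` [set w | w 0%N <= a].
pose G := [set w : nat -> R | w 0%N <= w 1%N <= a].
have sA : sigmaY 2 A.
  apply: (sigmaY_coords _ (measurable_and
    (measurable_fun_ltr (mtnth o0) (mtnth o1))
    (measurable_fun_ler (mtnth o0) (measurable_cst a)))).
  by move=> w; rewrite /= !coordsE; split => [[-> ->] | /andP].
have sG : sigmaY 2 G.
  apply: (sigmaY_coords _ (measurable_and
    (measurable_fun_ler (mtnth o0) (mtnth o1))
    (measurable_fun_ler (mtnth o1) (measurable_cst a)))).
  by move=> w; rewrite /= !coordsE.
have sLeSa : sigmaY 2 (Le `&` [set w | w 0%N <= a]).
  apply: (sigmaY_coords _ (measurable_and
    (measurable_fun_ler (mtnth o1) (mtnth o0))
    (measurable_fun_ler (mtnth o0) (measurable_cst a)))).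
  by move=> w; rewrite /= !coordsE; split => [[-> ->] | /andP].
have mA := sigmaY_measurable sA; have mG := sigmaY_measurable sG.
have PAG : P A = P G.
  rewrite /A -cell_balance; last exact: (sigmaY_coord_le (ord0 : 'I_1) a).
  apply: P_swap => // w.
  by rewrite /Le /G /= swap0 swap1; split => [[-> ->] | /andP].
exists (A `\` G); split; first exact: measurableD.
  rewrite measureD_eq ?P_fin //.
  apply/negligibleP; first exact: measurableD.
  apply: negligibleS tie_negligible.
  move=> w /= [/andP[w01 w1a] notA]; apply/eqP; rewrite eq_le w01 leNgt /=.
  by apply/negP => lt01; apply: notA; split; [exact: lt01 | exact: le_trans w1a].
move=> w /= /andP[w0a aw1]; split; first by split => //; exact: le_lt_trans aw1.
by move=> /andP[_ w1a]; have := lt_le_trans aw1 w1a; rewrite ltxx.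
Qed.

Lemma exchangeable_lt_null : P Lt = 0%E.
Proof.
apply: measure_negligible; first exact: sigmaY_measurable sigmaY_Lt.
by apply: negligible_ltr_rat => q; exact: split_negligible.
Qed.

End exchangeable_pair.

Theorem mainTheorem3 (R : realType) :
  ~ exists P : probability (Rinf R) R,
      exchangeable P /\
      forall n k : nat, (1 <= n)%N -> (k <= n)%N ->
        condprob_const P n (cell_event n k) (n.+1%:R)^-1.
Proof.
move=> [P [exchP cells]].
have cell_balance B : sigmaY 1 B ->
    P ([set w | w 1%N <= w 0%N] `&` B) = P ([set w | w 0%N < w 1%N] `&` B).
  by move=> sB; rewrite -cell_event10 -cell_event11 !cells.
have := cells 1%N 1%N isT isT setT (@sigmaY_setT R 1).
rewrite cell_event11 setIT probability_setT mule1 (exchangeable_lt_null exchP cell_balance).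
by move=> /eqP; rewrite eq_sym eqe invr_eq0 pnatr_eq0.
Qed.
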